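(* Let $D=(N,A)$, $\mathcal{K}$, $\{D^k\}_{k\in\mathcal{K}}$ be an instance of SND-RR, let $\mathcal{A}=\{\mathcal{A}_v\}_{v\in N}$ be a valid arc partition for it, and let $G=G(D,\mathcal{A})$ be the auxiliary flat network. Then for each commodity $k\in\mathcal{K}$, the subgraph $G^k$ has the same number of nodes and the same number of arcs as $D^k$.
   Context: An instance of SND-RR has a directed graph $D=(N,A)$, a set $\mathcal{K}$ of commodities each with origin $o_k\in N$ and destination $d_k\in N$, and for each $k$ a subgraph $D^k=(N^k,A^k)\subseteq D$. Standing assumption: for each $k$, $\delta^+_{D^k}(d_k)=\emptyset$, and $\delta^+_{D^k}(v)\neq\emptyset$ for every $v\in N^k\setminus\{d_k\}$ (where $\delta^+_H(v)$ denotes the arcs of $H$ leaving $v$). A partition $\mathcal{A}=\{\mathcal{A}_v\}_{v\in N}$ is valid if for each $v\in N$, $\mathcal{A}_v=\{A_1,\dots,A_r\}$ is a partition of $\delta^+_D(v)$, and for each $k\in\mathcal{K}$ there is $A_i\in\mathcal{A}_v$ with $\delta^+_{D^k}(v)\subseteq A_i$. For each $v\in N$ let $\mathcal{V}(v)=\{v^0,v^1,\dots,v^{|\mathcal{A}_v|}\}$: a copy $v^i$ for each part $A_i\in\mathcal{A}_v$ plus a terminal copy $v^0$. The auxiliary flat network $G=G(D,\mathcal{A})=(V,E)$ has $V=\bigcup_{v\in N}\mathcal{V}(v)$ and $E=\{v^iw^j: vw\in A_i\in\mathcal{A}_v,\ w^j\in\mathcal{V}(w)\}$. For $v\in N$ and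 $A_i\in\mathcal{A}_v$ let $\mathcal{K}(A_i)=\{k\in\mathcal{K}:\emptyset\neq\delta^+_{D^k}(v)\subseteq A_i\}$. For $k\in\mathcal{K}$, $G^k=(V^k,E^k)$ where $V^k=\{v^i: v\in N^k, A_i\in\mathcal{A}_v, k\in\mathcal{K}(A_i)\}\cup\{d_k^0\}$ and $E^k=\{v^iw^j: vw\in A^k, v^i\in V^k, w^j\in V^k\}$. *)

From mathcomp Require Import all_boot.
Set Implicit Arguments. Unset Strict Implicit. Unset Printing Implicit Defensive.

Definition outarcs (N : finType) (H : {set N * N}) (v : N) : {set N * N} :=
  [set a in H | a.1 == v].

Definition SNDRR_instance (N K : finType) (A : {set N * N}) (o d : K -> N)
    (Nk : K -> {set N}) (Ak : K -> {set N * N}) : Prop :=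
  forall k : K,
    [/\ Ak k \subset A,
        (forall a, a \in Ak k -> (a.1 \in Nk k) && (a.2 \in Nk k)),
        (o k \in Nk k) && (d k \in Nk k),
        outarcs (Ak k) (d k) = set0 &
        forall v, v \in Nk k -> v != d k -> outarcs (Ak k) v != set0].

Definition valid_partition (N K : finType) (A : {set N * N})
    (Ak : K -> {set N * N}) (Pv : N -> {set {set N * N}}) : Prop :=
  forall v : N,
    partition (Pv v) (outarcs A v) /\
    forall k : K, outarcs (Ak k) v != set0 ->
      exists2 Ai, Ai \in Pv v & outarcs (Ak k) v \subset Ai.

(* Copies of a node v: (v, None) is the terminal copy v^0, (v, Some Ai) is the
   copy v^i associated with the part Ai of A_v. *)
Definition copy (N : finType) := (N * option {set N * N})%type.

Definition auxV (N : finType) (Pv : N -> {set {set N * N}}) : {set copy N} :=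
  [set x : copy N | if x.2 is Some Ai then Ai \in Pv x.1 else true].

Definition auxE (N : finType) (Pv : N -> {set {set N * N}})
    : {set copy N * copy N} :=
  [set e : copy N * copy N |
    [&& e.1 \in auxV Pv, e.2 \in auxV Pv &
        if e.1.2 is Some Ai then (e.1.1, e.2.1) \in Ai else false]].

Definition inK (N : finType) (Hk : {set N * N}) (v : N) (Ai : {set N * N})
    : bool :=
  (outarcs Hk v != set0) && (outarcs Hk v \subset Ai).

Definition Vk (N K : finType) (d : K -> N) (Nk : K -> {set N})
    (Ak : K -> {set N * N}) (Pv : N -> {set {set N * N}}) (k : K)
    : {set copy N} :=
  [set x : copy N | (x.1 \in Nk k) &&
     (if x.2 is Some Ai then (Ai \in Pv x.1) && inK (Ak k) x.1 Ai else false)]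
  :|: [set (d k, None)].

Definition Ek (N K : finType) (d : K -> N) (Nk : K -> {set N})
    (Ak : K -> {set N * N}) (Pv : N -> {set {set N * N}}) (k : K)
    : {set copy N * copy N} :=
  [set e : copy N * copy N |
    [&& (e.1.1, e.2.1) \in Ak k, e.1 \in Vk d Nk Ak Pv k &
        e.2 \in Vk d Nk Ak Pv k]].

From mathcomp Require Import all_boot.
Set Implicit Arguments. Unset Strict Implicit. Unset Printing Implicit Defensive.

(* Forgetting the copy index, x |-> x.1, is a bijection from V^k onto N^k: a
   node v <> d_k of N^k has exactly one copy in V^k, the one for the part of
   A_v containing the nonempty set delta^+_{D^k}(v), while d_k, which has no
   outgoing arc in D^k, only keeps its terminal copy.  Since E^k consists of
   the pairs of V^k whose projection lies in A^k, this bijection carries E^k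
   onto A^k as well. *)

Lemma trivIset_sub_eq (T : finType) (P : {set {set T}}) (S B C : {set T}) :
  trivIset P -> B \in P -> C \in P ->
  S != set0 -> S \subset B -> S \subset C -> B = C.
Proof.
move=> triv BP CP /set0Pn[x xS] /subsetP sSB /subsetP sSC.
by rewrite -(def_pblock triv BP (sSB x xS)) (def_pblock triv CP (sSC x xS)).
Qed.

Lemma card_pullback_rel (T U : finType) (f : T -> U) (V : {set T})
    (B : {set U * U}) :
  {in V &, injective f} ->
  (forall b, b \in B -> (b.1 \in f @: V) && (b.2 \in f @: V)) ->
  #|[set e : T * T | [&& (f e.1, f e.2) \in B, e.1 \in V & e.2 \in V]]|
    = #|B|.
Proof.
move=> f_inj B_im; set E := [set e | _].
have fE_inj : {in E &, injective (fun e : T * T => (f e.1, f e.2))}.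
  move=> [x y] [x' y']; rewrite !inE /= => /and3P[_ xV yV] /and3P[_ xV' yV'].
  by case=> /f_inj-> // /f_inj->.
rewrite -(card_in_imset fE_inj); apply: eq_card => b.
apply/imsetP/idP => [[e + ->]|bB]; first by rewrite inE => /and3P[].
have /andP[/imsetP[x xV bx] /imsetP[y yV by_]] := B_im b bB.
by exists (x, y); rewrite ?inE /= -bx -by_ -?surjective_pairing ?bB ?xV ?yV.
Qed.

Section FlatNetworkCommodity.

Variables (N K : finType) (A : {set N * N}) (o d : K -> N).
Variables (Nk : K -> {set N}) (Ak : K -> {set N * N}).
Variable Pv : N -> {set {set N * N}}.
Hypothesis instance : SNDRR_instance A o d Nk Ak.
Hypothesis valid : valid_partition A Ak Pv.
Variable k : K.

Local Notation V := (Vk d Nk Ak Pv k).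

Lemma in_Vk (x : copy N) :
  x \in V = ((x.1 \in Nk k) &&
    (if x.2 is Some Ai then (Ai \in Pv x.1) && inK (Ak k) x.1 Ai else false))
    || (x == (d k, None)).
Proof. by rewrite in_setU in_set in_set1. Qed.

Lemma Vk_terminal (v : N) : (v, None) \in V -> v = d k.
Proof. by rewrite in_Vk andbF => /eqP[]. Qed.

Lemma Vk_part (v : N) (Ai : {set N * N}) :
  (v, Some Ai) \in V -> [/\ v \in Nk k, v != d k, Ai \in Pv v & inK (Ak k) v Ai].
Proof.
have [_ _ _ out_d _] := instance k.
rewrite in_Vk /= => /orP[/and3P[vN AiP kAi] | /eqP//]; split=> //.
by apply: contraTneq kAi => ->; rewrite /inK out_d eqxx.
Qed.

Lemma Vk_fst (x : copy N) : x \in V -> x.1 \in Nk k.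
Proof.
have [_ _ /andP[_ dN] _ _] := instance k.
by case: x => [v [Ai /Vk_part[]|/Vk_terminal ->]].
Qed.

Lemma Vk_fst_inj : {in V &, injective (fun x : copy N => x.1)}.
Proof.
move=> [v [Ai|]] [w [Aj|]] /= xV yV vw; subst w.
- have [_ _ AiP /andP[ne sAi]] := Vk_part xV.
  have [_ _ AjP /andP[_ sAj]] := Vk_part yV.
  have /and3P[_ triv _] := (valid v).1.
  by rewrite (trivIset_sub_eq triv AiP AjP ne sAi sAj).
- by have [_ /eqP[]] := Vk_part xV; apply: Vk_terminal.
- by have [_ /eqP[]] := Vk_part yV; apply: Vk_terminal.
- by [].
Qed.

Lemma Vk_fst_onto (v : N) : v \in Nk k -> v \in [set x.1 | x in V].
Proof.
move=> vN; have [_ _ _ _ out_ne] := instance k.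
have [-> | vd] := eqVneq v (d k).
  by apply/imsetP; exists (d k, None); rewrite // in_Vk eqxx orbT.
have [Ai AiP sAi] := (valid v).2 k (out_ne v vN vd).
by apply/imsetP; exists (v, Some Ai); rewrite // in_Vk /= vN AiP /inK sAi out_ne.
Qed.

Lemma card_Vk : #|V| = #|Nk k|.
Proof.
rewrite -(card_in_imset Vk_fst_inj); apply: eq_card => v.
by apply/imsetP/idP => [[x /Vk_fst xN ->] // | /Vk_fst_onto/imsetP].
Qed.

Lemma card_Ek : #|Ek d Nk Ak Pv k| = #|Ak k|.
Proof.
have [_ Ak_N _ _ _] := instance k.
apply: (card_pullback_rel Vk_fst_inj) => a /Ak_N/andP[a1 a2].
by rewrite !Vk_fst_onto.
Qed.

End FlatNetworkCommodity.

Theorem lemma1 (N K : finType) (A : {set N * N}) (o d : K -> N)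
    (Nk : K -> {set N}) (Ak : K -> {set N * N})
    (Pv : N -> {set {set N * N}}) :
  SNDRR_instance A o d Nk Ak ->
  valid_partition A Ak Pv ->
  forall k : K,
    #|Vk d Nk Ak Pv k| = #|Nk k| /\ #|Ek d Nk Ak Pv k| = #|Ak k|.
Proof.
move=> instance valid k.
by split; [exact: card_Vk instance valid k | exact: card_Ek instance valid k].
Qed.
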